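(* Let $G$ be a finite simple connected graph with at least two vertices and diameter $D$. The following are equivalent: (1) $G$ is distance degree regular. (2) For every function $g:\{1,\dots,D\}\to\mathbb{R}$ and every $A\subseteq V(G)$ with $|A|>0$, $$E_g(A)-E_g(V(G)\setminus A)=\left(\frac{2|A|}{|V(G)|}-1\right)E_g(V(G)).$$ (3) For every function $g:\{1,\dots,D\}\to\mathbb{R}$, the complement of every minimizer of $E_g$ is a minimizer of $E_g$. (4) There exists a function $g:\{1,\dots,D\}\to\mathbb{R}$ such that $\{g(1),\dots,g(D)\}$ is linearly independent over $\mathbb{Q}$ and the complement of every minimizer of $E_g$ is a minimizer of $E_g$. Moreover, the equivalence remains true if in both (3) and (4) the word ''minimizer'' is replaced throughout by ''local minimizer'', or throughout by ''maximizer'', or throughout by ''local maximizer''.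
   Context: $d(u,v)$ is shortest-path distance in $G$. For $g:\{1,\dots,D\}\to\mathbb{R}$ and $A\subseteq V(G)$, $E_g(A)=\sum_{\{u,v\}\subseteq A,u\ne v}g(d(u,v))$ over unordered pairs ($E_g(A)=0$ if $|A|\le1$). For $F$ a real function on subsets of $V(G)$: $A$ is a minimizer (maximizer) of $F$ if $F(A)$ is the minimum (maximum) of $F(B)$ over all $B\subseteq V(G)$ with $|B|=|A|$. A perturbation of $A$ is a set $(A\setminus\{u\})\cup\{v\}$ with $u\in A$, $v\notin A$ and $uv$ an edge; $A$ is a local minimizer (maximizer) of $F$ if $F(A)$ equals the minimum (maximum) of $F(B)$ over all perturbations $B$ of $A$. The distance vector $\vec D(u)$ of a vertex $u$ is the non-decreasingly sorted tuple of distances from $u$ to all other vertices; $G$ is distance degree regular if $\vec D(u)=\vec D(v)$ for all vertices $u,v$ (equivalently, for each $i$, all vertices have the same number of vertices at distance $i$). *)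

From HB Require Import structures.
From mathcomp Require Import all_boot all_order all_algebra.
From mathcomp Require Import reals.
Set Implicit Arguments. Unset Strict Implicit. Unset Printing Implicit Defensive.
Import Order.TTheory GRing.Theory Num.Theory.

Section Graph.
Variables (T : finType) (e : rel T).

Definition simple_graph := symmetric e /\ irreflexive e.
Definition connected_graph := forall u v : T, connect e u v.

Fixpoint nwalk (n : nat) (u v : T) : bool :=
  if n is n'.+1 then [exists w, e u w && nwalk n' w v] else u == v.

(* shortest-path distance: least n with an n-edge walk (for connected
   graphs this is < #|T|; the value #|T| is only a junk value). *)
Definition dist (u v : T) : nat := find (fun n => nwalk n u v) (iota 0 #|T|).

Definition diameter : nat := \max_(u : T) \max_(v : T) dist u v.

Definition dist_vector (u : T) : seq nat := sort leq [seq dist u w | w in [set~ u]].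

Definition distance_degree_regular := forall u v : T, dist_vector u = dist_vector v.

Variable R : realType.

(* E_g(A): sum over unordered pairs {u,v} of distinct vertices of A
   (each unordered pair counted once, via the enumeration order of T) *)
Definition Eg (g : nat -> R) (A : {set T}) : R :=
  \sum_(u in A) \sum_(v in A | (enum_rank u < enum_rank v)%N) g (dist u v).

Definition is_minimizer (F : {set T} -> R) (A : {set T}) :=
  forall B : {set T}, #|B| = #|A| -> (F A <= F B)%R.
Definition is_maximizer (F : {set T} -> R) (A : {set T}) :=
  forall B : {set T}, #|B| = #|A| -> (F B <= F A)%R.

Definition is_perturbation (A B : {set T}) :=
  exists u v, [/\ u \in A, v \notin A, e u v & B = (A :\ u) :|: [set v]].

Definition is_local_minimizer (F : {set T} -> R) (A : {set T}) :=
  forall B, is_perturbation A B -> (F A <= F B)%R.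
Definition is_local_maximizer (F : {set T} -> R) (A : {set T}) :=
  forall B, is_perturbation A B -> (F B <= F A)%R.

Inductive opt_kind := Minimizer | LocalMinimizer | Maximizer | LocalMaximizer.

Definition is_opt (k : opt_kind) : ({set T} -> R) -> {set T} -> Prop :=
  match k with
  | Minimizer => is_minimizer
  | LocalMinimizer => is_local_minimizer
  | Maximizer => is_maximizer
  | LocalMaximizer => is_local_maximizer
  end.

Definition compl_closed (k : opt_kind) (g : nat -> R) :=
  forall A : {set T}, is_opt k (Eg g) A -> is_opt k (Eg g) (~: A).

Definition Q_lin_indep (g : nat -> R) (D : nat) :=
  forall q : nat -> rat,
    (\sum_(1 <= i < D.+1) ratr (q i) * g i)%R = 0%R ->
    forall i, (1 <= i <= D)%N -> q i = 0%R.

End Graph.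

From HB Require Import structures.
From mathcomp Require Import all_boot all_order all_algebra.
From mathcomp Require Import reals exp.
From mathcomp Require Import ring lra zify.
Set Implicit Arguments. Unset Strict Implicit. Unset Printing Implicit Defensive.
Import Order.TTheory GRing.Theory Num.Theory.
Local Open Scope ring_scope.

(* For a weight g, the transmission of u is tr_g(u) = sum_(w <> u) g(d(u,w)).
   Counting ordered pairs gives
     2 (E_g(A) - E_g(V \ A)) = sum_(u in A) tr_g(u) - sum_(u notin A) tr_g(u)
   and E_g(V) - E_g(V \ {u}) = tr_g(u).  Distance degree regularity makes every
   tr_g constant, so E_g(V \ A) - E_g(A) depends only on |A|: this is the
   identity (2), and it lets complementation map optimizers to optimizers.
   Conversely, singletons are optimizers of every kind, so if complements of
   optimizers are optimizers then so are the sets V \ {u}; along an edge each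
   of them is a perturbation of the other, so by connectivity E_g(V \ {u}),
   and thus tr_g(u), does not depend on u; the identity (2) at A = {u} gives
   the same conclusion directly.  Now tr_g(u) = sum_i n_i(u) g(i), where n_i(u)
   counts the vertices at distance i from u, so when g(1), ..., g(D) are
   Q-linearly independent the counts n_i(u) do not depend on u either.  Such a
   g exists: g(i) = ln p_i for distinct primes p_i, by unique factorization. *)

Section Distance.
Variables (T : finType) (e : rel T).

Lemma nwalkS n u v : nwalk e n.+1 u v = [exists w, e u w && nwalk e n w v].
Proof. by []. Qed.

Lemma nwalkSr n u v : nwalk e n.+1 u v = [exists w, nwalk e n u w && e w v].
Proof.
elim: n u => [|n IHn] u.
  apply/existsP/existsP => -[w /andP[]].
    by move=> euw /eqP <-; exists u; rewrite /= eqxx.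
  by move=> /eqP <- euv; exists v; rewrite /= euv eqxx.
rewrite nwalkS; apply/existsP/existsP => -[w /andP[]].
  move=> euw; rewrite IHn => /existsP[x /andP[wx exv]].
  by exists x; rewrite exv andbT nwalkS; apply/existsP; exists w; rewrite euw.
rewrite nwalkS => /existsP[x /andP[eux xw]] ewv.
by exists x; rewrite eux IHn; apply/existsP; exists w; rewrite xw.
Qed.

Hypothesis e_sym : symmetric e.

Lemma nwalk_sym n u v : nwalk e n u v = nwalk e n v u.
Proof.
elim: n u v => [|n IHn] u v; first exact: eq_sym.
rewrite nwalkS nwalkSr; apply: eq_existsb => w.
by rewrite e_sym IHn andbC.
Qed.

Lemma dist_sym u v : dist e u v = dist e v u.
Proof. by apply: eq_find => n; rewrite nwalk_sym. Qed.

End Distance.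

Lemma dist_gt0 (T : finType) (e : rel T) u v : u != v -> (0 < dist e u v)%N.
Proof.
move=> neq_uv; have : (0 < #|T|)%N by apply/card_gt0P; exists u.
by rewrite /dist; case: #|T| => //= n _; rewrite (negbTE neq_uv).
Qed.

Lemma dist_le_diameter (T : finType) (e : rel T) u v : (dist e u v <= diameter e)%N.
Proof.
apply: leq_trans (leq_bigmax_cond _ isT); exact: leq_bigmax_cond.
Qed.

Section Transmission.
Variables (T : finType) (e : rel T).
Hypothesis e_sym : symmetric e.
Variables (R : realType) (g : nat -> R).

Definition transmission (u : T) : R := \sum_(w | w != u) g (dist e u w).

Definition cross_sum (A B : {set T}) : R :=
  \sum_(u in A) \sum_(v in B) g (dist e u v).

Lemma cross_sumC A B : cross_sum A B = cross_sum B A.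
Proof.
rewrite /cross_sum exchange_big; apply: eq_bigr => u _.
by apply: eq_bigr => v _; rewrite dist_sym.
Qed.

Lemma Eg_le1 (A : {set T}) : (#|A| <= 1)%N -> Eg e g A = 0.
Proof.
move/card_le1_eqP => A_le1; rewrite /Eg big1 // => u uA.
by rewrite big1 // => v /andP[vA]; rewrite (A_le1 _ _ vA uA) ltnn.
Qed.

Lemma Eg_ordered_pairs (A : {set T}) :
  Eg e g A *+ 2 = \sum_(u in A) \sum_(v in A | v != u) g (dist e u v).
Proof.
have rank_split u : \sum_(v in A | v != u) g (dist e u v) =
    \sum_(v in A | (enum_rank u < enum_rank v)%N) g (dist e u v) +
    \sum_(v in A | (enum_rank v < enum_rank u)%N) g (dist e u v).
  rewrite (bigID (fun v => (enum_rank u < enum_rank v)%N)) /=.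
  congr (_ + _); apply: eq_bigl => v; rewrite -andbA; congr (_ && _);
    rewrite -(inj_eq enum_rank_inj) -val_eqE /=; case: ltngtP => //=.
rewrite (eq_bigr _ (fun u _ => rank_split u)) big_split /= mulr2n; congr (_ + _).
rewrite (exchange_big_dep (mem A)) /=; last by move=> u v _ /andP[].
apply: eq_bigr => u uA; apply: eq_big => [v|v _]; first by rewrite uA.
by rewrite dist_sym.
Qed.

Lemma sum_transmission (A : {set T}) :
  \sum_(u in A) transmission u = Eg e g A *+ 2 + cross_sum A (~: A).
Proof.
rewrite Eg_ordered_pairs /cross_sum -big_split /=; apply: eq_bigr => u uA.
rewrite /transmission (bigID (mem A)) /=; congr (_ + _).
  by apply: eq_bigl => v; rewrite andbC.
apply: eq_bigl => v; rewrite in_setC andb_idl //.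
by apply: contraNneq => ->.
Qed.

Lemma Eg_setT : Eg e g [set: T] *+ 2 = \sum_u transmission u.
Proof.
have := sum_transmission [set: T]; rewrite setCT.
rewrite [cross_sum _ _]big1 ?addr0 => [<-|u _]; last by rewrite big_set0.
by apply: eq_bigl => u; rewrite in_setT.
Qed.

Lemma Eg_setC_diff (A : {set T}) :
  (Eg e g A - Eg e g (~: A)) *+ 2 =
  \sum_(u in A) transmission u - \sum_(u in ~: A) transmission u.
Proof.
by rewrite !sum_transmission setCK (cross_sumC (~: A)) mulrnBl; ring.
Qed.

Lemma Eg_setTD1 u : Eg e g [set: T] - Eg e g (~: [set u]) = transmission u.
Proof.
have := Eg_setC_diff [set u]; have := Eg_setT.
rewrite (@Eg_le1 [set u]) ?cards1 // big_set1 (bigD1 u) //=.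
rewrite (eq_bigl (mem (~: [set u]))) => [|v]; last by rewrite !inE.
lra.
Qed.

Lemma transmission_dist_vector u :
  transmission u = \sum_(x <- dist_vector e u) g x.
Proof.
rewrite /dist_vector (perm_big _ (permEl (perm_sort _ _))) big_map big_enum /=.
by apply: eq_bigl => w; rewrite in_setC1.
Qed.

Lemma transmission_const_of_ddr :
  distance_degree_regular e -> forall u v, transmission u = transmission v.
Proof. by move=> ddr u v; rewrite !transmission_dist_vector (ddr u v). Qed.

Lemma Eg_setC_diff_const (A : {set T}) :
  (0 < #|T|)%N -> (forall u v, transmission u = transmission v) ->
  Eg e g A - Eg e g (~: A) = (2%:R * #|A|%:R / #|T|%:R - 1) * Eg e g [set: T].
Proof.
move=> T_gt0 tr_const; have /card_gt0P[u0 _] := T_gt0; set c := transmission u0.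
have sum_tr (P : pred T) : \sum_(u in P) transmission u = c * #|P|%:R.
  by rewrite (eq_bigr (fun _ => c)) ?sumr_const ?mulr_natr // => u _; apply: tr_const.
have := Eg_setC_diff A; have := Eg_setT; rewrite !sum_tr -(cardsC A) natrD !mulr2n.
have : (#|A|%:R + #|~: A|%:R : R) != 0 by rewrite -natrD pnatr_eq0 cardsC -lt0n.
set a := (#|A|%:R : R); set b := (#|~: A|%:R : R) => ab_neq0 EgT EgA.
have -> : Eg e g A - Eg e g (~: A) = c * (a - b) / 2 by rewrite mulrBr -EgA; field.
have -> : Eg e g [set: T] = c * (a + b) / 2 by rewrite -EgT; field.
by field.
Qed.

End Transmission.

Section Optimizers.
Variables (T : finType) (e : rel T) (R : realType).

Lemma card_perturbation (A B : {set T}) : is_perturbation e A B -> #|B| = #|A|.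
Proof.
move=> [u [v [uA vNA _ ->]]].
by rewrite setUC cardsU1 in_setD1 (negbTE vNA) andbF (cardsD1 u A) uA.
Qed.

Lemma opt_perturbation_eq k (F : {set T} -> R) (A B : {set T}) :
  is_opt e k F A -> is_opt e k F B ->
  is_perturbation e A B -> is_perturbation e B A -> F A = F B.
Proof.
move=> optA optB pAB pBA; have cAB := card_perturbation pAB.
by apply/eqP; rewrite eq_le; case: k optA optB => /= optA optB; rewrite optA ?optB.
Qed.

Hypothesis e_sym : symmetric e.

Lemma perturbation_setC (A B : {set T}) :
  is_perturbation e (~: A) B -> is_perturbation e A (~: B).
Proof.
move=> [u [v [uNA vA euv ->]]]; rewrite in_setC in uNA; rewrite in_setC negbK in vA.
exists v, u; split=> //; first by rewrite e_sym.
have nuv : u != v by apply: contraNneq uNA => ->.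
apply/setP => x; rewrite !inE; have [->|xNv] := eqVneq x v.
  by rewrite orbT eq_sym (negbTE nuv).
by rewrite orbF negb_and !negbK orbC.
Qed.

Variable F : {set T} -> R.
Variable shift : nat -> R.
Hypothesis F_setC : forall A, F (~: A) = F A + shift #|A|.

Lemma opt_setC k (A : {set T}) : is_opt e k F A -> is_opt e k F (~: A).
Proof.
have F_setC_sub B : #|~: B| = #|A| -> F (~: A) - F B = F A - F (~: B).
  by move=> cB; rewrite (F_setC A) -{1}[B]setCK (F_setC (~: B)) cB; ring.
have cardC (B : {set T}) : #|B| = #|~: A| -> #|~: B| = #|A|.
  by move=> cB; have := cardsC A; have := cardsC B; lia.
case: k => /= optA B cB.
1,3: by have := optA _ (cardC _ cB); have := F_setC_sub _ (cardC _ cB); lra.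
all: have pB := perturbation_setC cB.
all: by have := optA _ pB; have := F_setC_sub _ (card_perturbation pB); lra.
Qed.

End Optimizers.

Lemma connected_const (T : finType) (e : rel T) (X : Type) (f : T -> X) :
  connected_graph e -> (forall u w, e u w -> f u = f w) -> forall u v, f u = f v.
Proof.
move=> conn f_edge u v; have /connectP[p] := conn u v.
elim: p u => [|w p IHp] u /=; first by move=> _ ->.
by case/andP=> euw pw vl; rewrite (f_edge _ _ euw) (IHp _ pw vl).
Qed.

Section ComplementClosed.
Variables (T : finType) (e : rel T).
Hypotheses (e_sym : symmetric e) (e_irr : irreflexive e).
Variables (R : realType) (g : nat -> R).

Lemma set1_opt k u : is_opt e k (Eg e g) [set u].
Proof.
have Eg_card1 (B : {set T}) : #|B| = 1%N -> Eg e g B = 0.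
  by move=> cB; rewrite Eg_le1 ?cB.
rewrite /is_opt; case: k => /= B cB; rewrite !Eg_card1 ?cards1 //.
1,3: by rewrite cB cards1.
all: by rewrite (card_perturbation cB) cards1.
Qed.

Lemma perturbation_setC1 u w : e u w -> is_perturbation e (~: [set u]) (~: [set w]).
Proof.
move=> euw; apply: perturbation_setC => //; rewrite setCK.
exists u, w; split; rewrite ?set11 ?setDv ?set0U //.
by rewrite in_set1; apply: contraTneq euw => ->; rewrite e_irr.
Qed.

Lemma transmission_const_of_Eg_setC1 :
  (forall u v, Eg e g (~: [set u]) = Eg e g (~: [set v])) ->
  forall u v, transmission e g u = transmission e g v.
Proof. by move=> Eg_const u v; rewrite -!(Eg_setTD1 e_sym) (Eg_const u v). Qed.

Lemma transmission_const_of_compl_closed k :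
  connected_graph e -> compl_closed e k g ->
  forall u v, transmission e g u = transmission e g v.
Proof.
move=> conn cc; apply: transmission_const_of_Eg_setC1.
apply: connected_const conn _ => u w euw.
apply: (@opt_perturbation_eq _ e _ k).
1,2: exact/cc/set1_opt.
  exact: perturbation_setC1.
by apply: perturbation_setC1; rewrite e_sym.
Qed.

Lemma compl_closed_of_ddr k :
  (0 < #|T|)%N -> distance_degree_regular e -> compl_closed e k g.
Proof.
move=> T_gt0 ddr A; pose shift m := - ((2%:R * m%:R / #|T|%:R - 1) * Eg e g [set: T]).
have Eg_setC_shift B : Eg e g (~: B) = Eg e g B + shift #|B|.
  have := Eg_setC_diff_const e_sym B T_gt0 (transmission_const_of_ddr g ddr).
  by rewrite /shift => <-; ring.
exact: (opt_setC e_sym Eg_setC_shift (k := k)).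
Qed.

End ComplementClosed.

Lemma sumr_count_mem (V : zmodType) (f : nat -> V) (r s : seq nat) :
  uniq r -> {subset s <= r} ->
  \sum_(x <- s) f x = \sum_(i <- r) f i *+ count_mem i s.
Proof.
move=> r_uniq; elim: s => [|x s IHs] sub_sr.
  by rewrite big_nil big1 // => i _; rewrite mulr0n.
rewrite big_cons IHs => [|y ys]; last by apply: sub_sr; rewrite inE ys orbT.
under [RHS]eq_bigr => i _ do rewrite /= mulrnDr.
rewrite big_split /=; congr (_ + _).
rewrite (bigD1_seq x) ?sub_sr ?mem_head //= eqxx big1 ?addr0 //.
by move=> i; rewrite eq_sym => /negbTE ->.
Qed.

Lemma ddr_of_transmission_const (T : finType) (e : rel T) (R : realType) (g : nat -> R) :
  Q_lin_indep g (diameter e) ->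
  (forall u v, transmission e g u = transmission e g v) -> distance_degree_regular e.
Proof.
move=> g_indep tr_const u v; set D := diameter e.
pose dists w := [seq dist e w x | x in [set~ w]].
have dists_range w : {subset dists w <= index_iota 1 D.+1}.
  move=> d /mapP[x]; rewrite mem_enum in_setC1 => xw ->.
  by rewrite mem_index_iota ltnS dist_gt0 1?eq_sym // dist_le_diameter.
have tr_counts w :
    transmission e g w = \sum_(1 <= i < D.+1) g i *+ count_mem i (dists w).
  rewrite transmission_dist_vector (perm_big _ (permEl (perm_sort _ _))) /=.
  exact: sumr_count_mem (iota_uniq _ _) (dists_range w).
have counts i : count_mem i (dists u) = count_mem i (dists v).
  have [iD|iND] := boolP (1 <= i <= D)%N; last first.
    rewrite !(count_memPn _) //; apply: contra iND => /dists_range;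
      by rewrite mem_index_iota ltnS.
  apply/eqP; rewrite -(eqr_nat rat) -subr_eq0; apply/eqP.
  apply: (g_indep (fun j => (count_mem j (dists u))%:R - (count_mem j (dists v))%:R)) iD.
  have /eqP := tr_const u v; rewrite !tr_counts -subr_eq0 -sumrB => /eqP tr_diff.
  rewrite -[X in _ = X]tr_diff; apply: eq_bigr => j _.
  by rewrite rmorphB /= !ratr_nat mulrBl !mulr_natl.
by apply/perm_sortP; [exact: leq_total | exact: leq_trans | exact: anti_leq |];
  apply/allP => i _; apply/eqP.
Qed.

Section LinearIndependence.
Variable R : realType.

Lemma intr_indep_of_natr_inj (g : nat -> R) (r : seq nat) :
  (forall a b : nat -> nat,
     \sum_(i <- r) g i *+ a i = \sum_(i <- r) g i *+ b i -> {in r, a =1 b}) ->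
  forall z : nat -> int, \sum_(i <- r) g i *~ z i = 0 -> {in r, forall i, z i = 0}.
Proof.
move=> g_inj z z_g0 i ir.
pose pos j := if z j is Posz n then n else 0%N.
pose neg j := if z j is Negz n then n.+1 else 0%N.
have zE j : g j *~ z j = g j *+ pos j - g j *+ neg j.
  by rewrite /pos /neg; case: (z j) => n; rewrite ?subr0 // NegzE mulrNz sub0r.
have pos_neg : \sum_(j <- r) g j *+ pos j = \sum_(j <- r) g j *+ neg j.
  apply/eqP; rewrite -subr_eq0 -sumrB; apply/eqP; rewrite -[X in _ = X]z_g0.
  by apply: eq_bigr => j _; rewrite zE.
by have := g_inj _ _ pos_neg i ir; rewrite /pos /neg; case: (z i) => // n ->.
Qed.

Lemma Q_lin_indep_of_intr (g : nat -> R) (D : nat) :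
  (forall z : nat -> int, \sum_(1 <= i < D.+1) g i *~ z i = 0 ->
     {in index_iota 1 D.+1, forall i, z i = 0}) ->
  Q_lin_indep g D.
Proof.
move=> g_indep q q_g0; set r := index_iota 1 D.+1.
pose N := \prod_(j <- r) denq (q j).
pose z i := numq (q i) * \prod_(j <- r | j != i) denq (q j).
have N_neq0 : N != 0 by rewrite prodf_seq_neq0; apply/allP => j _; rewrite denq_neq0.
have zE i : i \in r -> (z i)%:~R = q i * N%:~R :> rat.
  move=> ir; rewrite /N (bigD1_seq i) ?iota_uniq //= /z.
  by rewrite !intrM numqE mulrA.
have z_g0 : \sum_(i <- r) g i *~ z i = 0.
  transitivity ((\sum_(i <- r) ratr (q i) * g i) * N%:~R); last first.
    by rewrite q_g0 mul0r.
  rewrite mulr_suml big_seq [RHS]big_seq; apply: eq_bigr => i ir.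
  by rewrite -mulrzr -[(z i)%:~R]ratr_int zE // rmorphM /= ratr_int mulrA [g i * _]mulrC.
move=> i iD; have ir : i \in r by rewrite mem_index_iota.
have := zE i ir; rewrite (g_indep z z_g0) // => /esym/eqP.
by rewrite mulf_eq0 intr_eq0 (negbTE N_neq0) orbF => /eqP.
Qed.

End LinearIndependence.

Definition prime_seq (n : nat) : nat := iter n (fun p => s2val (prime_above p)) 2.

Lemma prime_seq_prime n : prime (prime_seq n).
Proof. by case: n => [|n] //=; case: prime_above. Qed.

Lemma prime_seq_inj : injective prime_seq.
Proof.
apply: incn_inj; apply: leq_mono; apply: homo_ltn => [m n p|n]; first exact: ltn_trans.
by rewrite /=; case: prime_above.
Qed.

Lemma logn_prod_prime_seq (c : nat -> nat) (r : seq nat) j :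
  logn (prime_seq j) (\prod_(i <- r) prime_seq i ^ c i) = (\sum_(i <- r | i == j) c i)%N.
Proof.
have pos i : (0 < prime_seq i ^ c i)%N by rewrite expn_gt0 prime_gt0 ?prime_seq_prime.
elim: r => [|i r IHr]; first by rewrite !big_nil logn1.
rewrite !big_cons lognM ?prodn_gt0 // IHr lognX logn_prime ?prime_seq_prime //.
by rewrite (inj_eq prime_seq_inj) eq_sym; case: (i == j); rewrite ?muln1 ?muln0.
Qed.

Section LnPrimes.
Variable R : realType.

Lemma ln_prod (I : Type) (r : seq I) (F : I -> R) :
  (forall i, 0 < F i) -> ln (\prod_(i <- r) F i) = \sum_(i <- r) ln (F i).
Proof.
move=> F_gt0; elim: r => [|i r IHr]; first by rewrite !big_nil ln1.
by rewrite !big_cons lnM ?IHr // posrE ?prodr_gt0.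
Qed.

Lemma ln_prime_seq_natr_inj (r : seq nat) (a b : nat -> nat) : uniq r ->
  \sum_(i <- r) ln (prime_seq i)%:R *+ a i = \sum_(i <- r) ln (prime_seq i)%:R *+ b i :> R ->
  {in r, a =1 b}.
Proof.
have p_gt0 i : (0 < prime_seq i)%N by rewrite prime_gt0 ?prime_seq_prime.
have ln_prod_pow (c : nat -> nat) : \sum_(i <- r) ln (prime_seq i)%:R *+ c i =
    ln (\prod_(i <- r) prime_seq i ^ c i)%:R :> R.
  rewrite natr_prod ln_prod => [|i]; last by rewrite ltr0n expn_gt0 p_gt0.
  by apply: eq_bigr => i _; rewrite natrX lnXn // ltr0n.
have prod_gt0 (c : nat -> nat) : 0 < (\prod_(i <- r) prime_seq i ^ c i)%:R :> R.
  by rewrite ltr0n prodn_gt0 // => i; rewrite expn_gt0 p_gt0.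
move=> r_uniq; rewrite !ln_prod_pow => /ln_inj; rewrite !posrE !prod_gt0.
move=> /(_ isT isT)/eqP; rewrite eqr_nat => /eqP prod_eq j jr.
have := congr1 (logn (prime_seq j)) prod_eq.
by rewrite !logn_prod_prime_seq -!(big_filter r) filter_pred1_uniq // !big_seq1.
Qed.

Lemma Q_lin_indep_ln_prime_seq (D : nat) :
  Q_lin_indep (fun i => ln (prime_seq i)%:R : R) D.
Proof.
apply: Q_lin_indep_of_intr; apply: intr_indep_of_natr_inj => a b.
exact: ln_prime_seq_natr_inj (iota_uniq _ _).
Qed.

End LnPrimes.

Local Close Scope ring_scope.

Theorem mainTheorem9 (T : finType) (e : rel T) (R : realType) :
  simple_graph e -> connected_graph e -> (2 <= #|T|)%N ->
  let D := diameter e in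
  (distance_degree_regular e <->
     (forall (g : nat -> R) (A : {set T}), (0 < #|A|)%N ->
        (Eg e g A - Eg e g (~: A) =
         (2%:R * #|A|%:R / #|T|%:R - 1) * Eg e g [set: T])%R)) /\
  (forall k : opt_kind,
     (distance_degree_regular e <-> (forall g : nat -> R, compl_closed e k g)) /\
     (distance_degree_regular e <->
        (exists g : nat -> R, Q_lin_indep g D /\ compl_closed e k g))).
Proof.
move=> [e_sym e_irr] conn T_ge2 D; have T_gt0 : (0 < #|T|)%N by apply: leq_trans T_ge2.
pose lnp i := ln (prime_seq i)%:R : R.
have ddr_of_tr_const := ddr_of_transmission_const (@Q_lin_indep_ln_prime_seq R D).
split.
  split=> [ddr g A _|identity].
    exact (Eg_setC_diff_const e_sym A T_gt0 (transmission_const_of_ddr g ddr)).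
  apply/ddr_of_tr_const/(transmission_const_of_Eg_setC1 e_sym) => u v.
  have := identity lnp [set u]; have := identity lnp [set v].
  rewrite !cards1 !(@Eg_le1 _ _ _ _ [set _]) ?cards1 // !sub0r.
  by move=> /(_ isT) Ev /(_ isT) Eu; apply: oppr_inj; rewrite Eu Ev.
move=> k; split; split.
- by move=> ddr g; apply: compl_closed_of_ddr.
- move=> cc; apply: ddr_of_tr_const.
  exact (transmission_const_of_compl_closed e_sym e_irr conn (cc lnp)).
- by move=> ddr; exists lnp; split; [apply: Q_lin_indep_ln_prime_seq | apply: compl_closed_of_ddr].
- case=> g [g_indep cc]; apply: (ddr_of_transmission_const g_indep).
  exact: transmission_const_of_compl_closed cc.
Qed.
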